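(* Let $\boldsymbol J=(J_x)_{x\in\Sigma}$ be weights on $\Sigma=\mathsf V\cup\mathsf E$ (the vertices and nearest-neighbour edges of $\mathbb Z^d$) which are almost surely generic, and let $M$ and $M'$ be ground states for $\boldsymbol J$ in $\mathbb Z^d$. Then (almost surely) $M\,\Delta\,M'$ is a disjoint union of simple infinite and bi-infinite paths.
   Context: A matching of $\mathbb Z^d$ is a set $M\subset\Sigma$ such that every vertex either belongs to $M$ or is an endpoint of exactly one edge of $M$, but not both. For matchings $M,M'$ with $M\Delta M'$ finite, $H(M)-H(M')=\sum_{x\in M\setminus M'}J_x-\sum_{y\in M'\setminus M}J_y$. $M$ is a ground state of $\boldsymbol J$ if there is no matching $M'$ with $M\Delta M'$ finite and $H(M)-H(M')>0$. Weights are generic if for every finite $S\subset\Sigma$ and integers $(k_x)_{x\in S}$ not all zero, $\sum_{x\in S}k_xJ_x\ne0$. A simple infinite path is a sequence $(v_1,(v_1,v_2),(v_2,v_3),\dots)$ with the $v_i$ distinct and $v_i\sim v_{i+1}$; a bi-infinite path is a bi-infinite sequence of edges $(\dots,(v_{-1},v_0),(v_0,v_1),(v_1,v_2),\dots)$ with the $v_i$ distinct. *)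

From mathcomp Require Import all_boot all_order all_algebra.
From mathcomp Require Import boolp classical_sets cardinality fsbigop reals.
Set Implicit Arguments. Unset Strict Implicit. Unset Printing Implicit Defensive.
Import Order.TTheory GRing.Theory Num.Theory.
Local Open Scope classical_set_scope.
Local Open Scope ring_scope.

Definition vtx (d : nat) := 'rV[int]_d.

Definition unitv (d : nat) (i : 'I_d) : vtx d := delta_mx 0 i.

(* Sigma = V u E.  A nearest-neighbour edge {x, x + e_i} is encoded
   (uniquely) by the pair (x, i). *)
Definition Sigma (d : nat) := (vtx d + (vtx d * 'I_d))%type.

Definition SV d (v : vtx d) : Sigma d := inl v.
Definition SE d (x : vtx d) (i : 'I_d) : Sigma d := inr (x, i).

Definition adj d (v w : vtx d) : Prop :=
  exists i : 'I_d, w = v + unitv i \/ v = w + unitv i.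

Definition edge_between d (v w : vtx d) (s : Sigma d) : Prop :=
  exists i : 'I_d, (s = SE v i /\ w = v + unitv i) \/ (s = SE w i /\ v = w + unitv i).

Definition incident d (v : vtx d) (s : Sigma d) : Prop :=
  match s with
  | inl _ => False
  | inr (x, i) => v = x \/ v = x + unitv i
  end.

Definition matching d (M : set (Sigma d)) : Prop :=
  forall v : vtx d,
    (M (SV v) /\ ~ (exists e, M e /\ incident v e)) \/
    (~ M (SV v) /\ exists e, M e /\ incident v e /\
                     forall e', M e' -> incident v e' -> e' = e).

Definition symdiff T (A B : set T) : set T := (A `\` B) `|` (B `\` A).

(* H(M) - H(M') (meaningful when M Delta M' is finite). *)
Definition Hdiff (R : realType) d (J : Sigma d -> R) (M M' : set (Sigma d)) : R :=
  \sum_(x \in M `\` M') J x - \sum_(y \in M' `\` M) J y.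

Definition ground_state (R : realType) d (J : Sigma d -> R) (M : set (Sigma d)) : Prop :=
  ~ (exists M', matching M' /\ finite_set (symdiff M M') /\ 0 < Hdiff J M M').

Definition generic (R : realType) d (J : Sigma d -> R) : Prop :=
  forall (S : set (Sigma d)) (k : Sigma d -> int),
    finite_set S -> (exists x, S x /\ k x != 0) ->
    \sum_(x \in S) (k x)%:~R * J x != 0.

Definition simple_infinite_path d (P : set (Sigma d)) : Prop :=
  exists v : nat -> vtx d, injective v /\ (forall k, adj (v k) (v k.+1)) /\
    P = [set SV (v 0%N)] `|` [set s | exists k, edge_between (v k) (v k.+1) s].

Definition biinfinite_path d (P : set (Sigma d)) : Prop :=
  exists v : int -> vtx d, injective v /\ (forall k, adj (v k) (v (k + 1))) /\
    P = [set s | exists k, edge_between (v k) (v (k + 1)) s].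

Definition disjoint_union_of_paths d (A : set (Sigma d)) : Prop :=
  exists C : set (set (Sigma d)),
    (forall P, C P -> simple_infinite_path P \/ biinfinite_path P) /\
    (forall P Q, C P -> C Q -> P <> Q -> P `&` Q = set0) /\
    A = \bigcup_(P in C) P.

From mathcomp Require Import all_boot all_order all_algebra.
From mathcomp Require Import boolp classical_sets cardinality fsbigop reals.
From mathcomp Require Import zify.
Set Implicit Arguments. Unset Strict Implicit. Unset Printing Implicit Defensive.
Import Order.TTheory GRing.Theory Num.Theory.
Local Open Scope classical_set_scope.
Local Open Scope ring_scope.

(* Let [v] touch [s] when [s] is the vertex [v] itself or an edge at [v]. At
   every vertex touched by [M Δ M'] exactly two elements of [M Δ M'] meet, so
   [M Δ M'] is the union of the trails of a walker that always leaves a vertex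
   through the element by which it did not arrive. No nonempty finite set [C]
   can be closed under this rule: flipping [C] in [M] and in [M'] gives
   matchings whose energy changes are opposite, and nonzero by genericity, so
   one of the two ground states could be improved. Hence a trail never revisits
   a vertex: a trail through a vertex element of Σ starts there and is a simple
   infinite path, any other trail is a bi-infinite path. *)

Section Lattice.
Variable d : nat.
Implicit Types (v w : vtx d) (s t : Sigma d).

Lemma unitvE (i j : 'I_d) : unitv i 0 j = (i == j)%:R.
Proof. by rewrite /unitv mxE eqxx eq_sym. Qed.

Lemma unitv_inj : injective (@unitv d).
Proof.
move=> i j /matrixP/(_ 0 i); rewrite !unitvE eqxx.
by case: eqP => // _ /eqP; rewrite oner_eq0.
Qed.

Lemma addv_unitv_neq v (i : 'I_d) : v + unitv i != v.
Proof.
rewrite -subr_eq0 addrAC subrr add0r; apply/eqP => /matrixP/(_ 0 i).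
by rewrite unitvE eqxx mxE.
Qed.

Lemma addv_unitv2_neq v (i j : 'I_d) : v + unitv i + unitv j != v.
Proof.
rewrite -addrA -subr_eq0 addrAC subrr add0r; apply/eqP => /matrixP/(_ 0 i).
rewrite mxE (unitvE i i) (unitvE j i) eqxx mxE.
by case: (j == i).
Qed.

Definition touches v s : Prop := if s is inl w then v = w else incident v s.

Definition is_edge s : bool := if s is inr _ then true else false.

Definition far s v : vtx d :=
  if s is inr (x, i) then (if v == x then x + unitv i else x) else v.

Lemma far_touches v s : touches v s -> touches (far s v) s.
Proof. by case: s => [w|[x i]] //=; case: eqP => _ _; [right|left]. Qed.

Lemma farK v s : touches v s -> far s (far s v) = v.
Proof.
case: s => [//|[x i] [->|->]] /=; first by rewrite eqxx (negbTE (addv_unitv_neq _ _)).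
by rewrite (negbTE (addv_unitv_neq _ _)) eqxx.
Qed.

Lemma touches_far v w s : touches v s -> touches w s -> w = v \/ w = far s v.
Proof.
case: s => [u /= -> ->|[x i] /= [->|->] [->|->]]; try by left.
  by rewrite eqxx; right.
by rewrite (negbTE (addv_unitv_neq _ _)); right.
Qed.

Lemma far_vertex v s : ~~ is_edge s -> far s v = v.
Proof. by case: s. Qed.

Lemma far_neq v s : is_edge s -> touches v s -> far s v <> v.
Proof.
case: s => [//|[x i] _ [->|->]] /=; rewrite ?eqxx.
  exact/eqP/addv_unitv_neq.
by rewrite (negbTE (addv_unitv_neq _ _)); apply/nesym/eqP/addv_unitv_neq.
Qed.

Lemma edge_between_far v s : is_edge s -> touches v s -> edge_between v (far s v) s.
Proof.
case: s => [//|[x i] _ [->|->]] /=; exists i; rewrite ?eqxx; first by left.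
by rewrite (negbTE (addv_unitv_neq _ _)); right.
Qed.

Lemma edge_between_uniq v w s t : edge_between v w s -> edge_between v w t -> s = t.
Proof.
move=> [i [[-> ->]|[-> ->]]] [j [[-> e]|[-> e]]].
- by move/addrI/unitv_inj: e => ->.
- by move/eqP: e; rewrite eq_sym (negbTE (addv_unitv2_neq _ _ _)).
- by move/eqP: e; rewrite eq_sym (negbTE (addv_unitv2_neq _ _ _)).
- by move/addrI/unitv_inj: e => ->.
Qed.

Lemma edge_between_adj v w s : edge_between v w s -> adj v w.
Proof. by move=> [i [[_ ->]|[_ ->]]]; exists i; [left|right]. Qed.

End Lattice.

Section Matchings.
Variable d : nat.
Implicit Types (v : vtx d) (s t : Sigma d) (N C : set (Sigma d)).

Lemma matchingP N : matching N <-> forall v, exists! s, N s /\ touches v s.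
Proof.
split=> [hN v|hN v].
  case: (hN v) => [[Nv noE]|[Nv [e [Ne [ve ue]]]]].
    exists (SV v); split=> [//|[w|e] [Ne ve]]; first by rewrite ve.
    by case: noE; exists (inr e).
  have te : touches v e by case: e Ne ve ue.
  exists e; split=> [//|[w|b] [Nb vb]]; first by case: Nv; rewrite vb.
  exact/esym/ue.
have [[w|e] [[Na va] ua]] := hN v.
  rewrite /= in va; subst w; left; split=> // -[[w|e] [Ne ve]] //.
  by move: (ua _ (conj Ne ve)).
right; split; first by move=> Nv; have := ua (SV v) (conj Nv erefl).
exists (inr e); split=> //; split=> // -[w|e'] Ne' ve' //.
exact/esym/ua.
Qed.

Lemma eq_unique_touching N (N' : set (Sigma d)) v :
  (forall t, touches v t -> (N t <-> N' t)) ->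
  (exists! s, N s /\ touches v s) -> exists! s, N' s /\ touches v s.
Proof.
move=> NN' [s [[Ns vs] us]]; exists s; split; first by split=> //; apply/NN'.
by move=> t [/NN' + vt] => /(_ vt) Nt; apply: us.
Qed.

Lemma symdiffC N (N' : set (Sigma d)) : symdiff N N' = symdiff N' N.
Proof. exact: setUC. Qed.

Lemma symdiffK N C : symdiff N (symdiff N C) = C.
Proof.
apply/predeqP => x; rewrite /symdiff /setD /setU /=.
by have := lem (N x); have := lem (C x); tauto.
Qed.

Lemma matching_symdiff N (N' : set (Sigma d)) C :
  matching N -> matching N' -> C `<=` symdiff N N' ->
  (forall v s t, C s -> touches v s -> touches v t -> symdiff N N' t -> C t) ->
  matching (symdiff N C).
Proof.
move=> /matchingP hN /matchingP hN' CD Csat; apply/matchingP => v.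
have [[s [Cs vs]]|noC] := pselect (exists s, C s /\ touches v s).
  apply: (eq_unique_touching _ (hN' v)) => t vt.
  have := Csat v s t Cs vs vt; have := CD t; rewrite /symdiff /setD /setU /=.
  by have := lem (N t); have := lem (N' t); have := lem (C t); tauto.
apply: (eq_unique_touching _ (hN v)) => t vt.
have nCt : ~ C t by move=> Ct; apply: noC; exists t.
by rewrite /symdiff /setD /setU /=; tauto.
Qed.

Lemma symdiff_subset_setI N (N' : set (Sigma d)) C :
  C `<=` symdiff N N' -> C `&` N' = C `\` N.
Proof.
move=> CD; apply/predeqP => x; have := CD x; rewrite /symdiff /setD /setU /setI /=.
by have := lem (N x); have := lem (N' x); have := lem (C x); tauto.
Qed.

Lemma Hdiff_symdiff (R : realType) (J : Sigma d -> R) N C :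
  Hdiff J N (symdiff N C) = \sum_(x \in C `&` N) J x - \sum_(x \in C `\` N) J x.
Proof.
by congr (_ - _); apply: eq_fsbigl; apply/predeqP => x;
  rewrite /symdiff /setD /setU /setI /=; have := lem (N x); have := lem (C x); tauto.
Qed.

Lemma generic_fsbig_neq (R : realType) (J : Sigma d -> R) C N :
  generic J -> finite_set C -> C !=set0 ->
  \sum_(x \in C `&` N) J x != \sum_(x \in C `\` N) J x.
Proof.
move=> hJ fC [s Cs]; pose k x : int := if `[< N x >] then 1 else -1.
have sum_k : \sum_(x \in C) (k x)%:~R * J x =
    \sum_(x \in C `&` N) J x - \sum_(x \in C `\` N) J x.
  rewrite (fsbigID N) //; congr (_ + _).
    by apply: eq_fsbigr => x; rewrite inE => -[_ Nx]; rewrite /k asboolT // mul1r.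
  rewrite (eq_fsbigr (fun x => - J x)); last first.
    by move=> x; rewrite inE => -[_ Nx]; rewrite /k asboolF // mulN1r.
  by rewrite !fsbig_finite ?sumrN //; apply: finite_setIl.
rewrite -subr_eq0 -sum_k; apply: hJ fC _; exists s.
by split=> //; rewrite /k; case: ifP.
Qed.

Lemma symdiff_two_at N (N' : set (Sigma d)) v s : matching N -> matching N' ->
  symdiff N N' s -> touches v s ->
  exists t, [/\ symdiff N N' t, touches v t, t <> s &
    forall u, symdiff N N' u -> touches v u -> u = s \/ u = t].
Proof.
move=> hN hN'; wlog Ns : N N' hN hN' / N s.
  move=> wlog Ds vs; case: (Ds) => -[Ns _]; first exact: wlog.
  by rewrite symdiffC in Ds *; apply: wlog.
move=> Ds vs; have N's : ~ N' s by case: Ds => -[].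
have [a [_ ua]] := (matchingP N).1 hN v.
have [b [[N'b vb] ub]] := (matchingP N').1 hN' v.
have a_s : a = s := ua s (conj Ns vs); subst a.
have bs : b <> s by move=> bs; apply: N's; rewrite -bs.
exists b; split=> //.
  by right; split=> // Nb; apply: bs; rewrite (ua b).
move=> u [[Nu _]|[N'u _]] vu; first by left; rewrite (ua u).
by right; rewrite (ub u).
Qed.

Lemma ground_state_symdiff_le (R : realType) (J : Sigma d -> R) N C :
  ground_state J N -> matching (symdiff N C) -> finite_set C ->
  \sum_(x \in C `&` N) J x <= \sum_(x \in C `\` N) J x.
Proof.
move=> gN flipN fC; rewrite leNgt -subr_gt0 -Hdiff_symdiff; apply/negP => lt0.
by apply: gN; exists (symdiff N C); rewrite symdiffK.
Qed.

End Matchings.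

Section Alternating.
Variable d : nat.
Variables M M' : set (Sigma d).
Hypotheses (hM : matching M) (hM' : matching M').
Implicit Types (v : vtx d) (s t u : Sigma d) (C : set (Sigma d)).
Local Notation D := (symdiff M M').

Definition other v s := xget s [set t | D t /\ touches v t /\ t <> s].

Lemma otherP v s : D s -> touches v s ->
  [/\ D (other v s), touches v (other v s), other v s <> s &
    forall u, D u -> touches v u -> u = s \/ u = other v s].
Proof.
move=> Ds vs; have [t [Dt vt ts at_v]] := symdiff_two_at hM hM' Ds vs.
have [Do [vo os]] : [set t | D t /\ touches v t /\ t <> s] (other v s).
  by apply: xgetPex; exists t.
by case: (at_v _ Do vo) => [/os|->].
Qed.

Lemma other_eq v s t : D s -> touches v s -> D t -> touches v t -> t <> s ->
  other v s = t.
Proof.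
move=> Ds vs Dt vt ts; have [_ _ _ at_v] := otherP Ds vs.
by case: (at_v _ Dt vt).
Qed.

Lemma otherK v s : D s -> touches v s -> other v (other v s) = s.
Proof.
move=> Ds vs; have [Do vo os _] := otherP Ds vs.
by apply: other_eq => // /esym.
Qed.

Definition other_closed C := forall v s, C s -> touches v s -> C (other v s).

Lemma ground_states_finite_closed_eq0 (R : realType) (J : Sigma d -> R) C :
  generic J -> ground_state J M -> ground_state J M' ->
  C `<=` D -> finite_set C -> other_closed C -> C = set0.
Proof.
move=> hJ gM gM' CD fC Ccl; apply/nonemptyPn => C_neq0.
have Csat N N' : symdiff N N' = D ->
    forall v s t, C s -> touches v s -> touches v t -> symdiff N N' t -> C t.
  move=> -> v s t Cs vs vt Dt; have [_ _ _ at_v] := otherP (CD _ Cs) vs.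
  by case: (at_v _ Dt vt) => ->; last exact: Ccl.
have CD' : C `<=` symdiff M' M by rewrite symdiffC.
have flipM := matching_symdiff hM hM' CD (Csat _ _ erefl).
have flipM' := matching_symdiff hM' hM CD' (Csat _ _ (symdiffC _ _)).
have le1 := ground_state_symdiff_le gM flipM fC.
have := ground_state_symdiff_le gM' flipM' fC.
rewrite (symdiff_subset_setI CD) -(symdiff_subset_setI CD') => le2.
have := generic_fsbig_neq M hJ fC C_neq0.
by rewrite eq_le le1 le2.
Qed.

End Alternating.

Lemma negz_add1 (n : nat) : Negz n + 1 = - n%:Z.
Proof. by rewrite NegzE -addn1 PoszD opprD addrNK. Qed.

Section IntIterate.
Variables (T : Type) (P : T -> Prop) (f g : T -> T).
Hypotheses (fP : forall x, P x -> P (f x)) (gP : forall x, P x -> P (g x)).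
Hypotheses (fK : forall x, P x -> g (f x) = x) (gK : forall x, P x -> f (g x) = x).

Definition iterz (k : int) x : T :=
  match k with Posz n => iter n f x | Negz n => iter n.+1 g x end.

Lemma iterzN (n : nat) x : iterz (- n%:Z) x = iter n g x.
Proof. by case: n. Qed.

Lemma iter_stable (F : T -> T) n x :
  (forall y, P y -> P (F y)) -> P x -> P (iter n F x).
Proof. by move=> FP Px; elim: n => //= n; apply: FP. Qed.

Lemma iterz_stable k x : P x -> P (iterz k x).
Proof. by case: k => n; apply: iter_stable. Qed.

Lemma iterzS k x : P x -> iterz (k + 1) x = f (iterz k x).
Proof.
case: k => n Px; first by rewrite -PoszD addn1.
by rewrite negz_add1 iterzN /= gK //; apply: iter_stable.
Qed.

Lemma iterz_eq (h : int -> T) : (forall k, P (h k)) ->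
  (forall k, h (k + 1) = f (h k)) -> forall k, h k = iterz k (h 0).
Proof.
move=> hP hS; elim/int_rec => [//|n IH|n IH].
  by rewrite -[in LHS]addn1 PoszD hS IH.
rewrite iterzN in IH *; rewrite /= -IH -[LHS](fK (hP _)) -hS.
by rewrite -NegzE negz_add1.
Qed.

Lemma iterzD k l x : P x -> iterz (k + l) x = iterz l (iterz k x).
Proof.
move=> Px; rewrite -[in RHS](addr0 k).
apply: (iterz_eq (h := fun j => iterz (k + j) x)) => [j|j].
  exact: iterz_stable.
by rewrite addrA iterzS.
Qed.

Variable r : T -> T.
Hypotheses (rP : forall x, P x -> P (r x)) (fr : forall x, P x -> f (r x) = r (g x)).

Lemma iterz_conj k x : P x -> iterz k (r x) = r (iterz (- k) x).
Proof.
move=> Px; apply/esym; apply: (iterz_eq (h := fun l => r (iterz (- l) x))) => [l|l].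
  by apply/rP/iterz_stable.
rewrite fr; last exact: iterz_stable.
by rewrite -[in RHS](addrNK 1 (- l)) iterzS ?fK ?opprD //; apply: iterz_stable.
Qed.

End IntIterate.

Lemma int_injective (T : Type) (h : int -> T) :
  (forall a (n : nat), h a <> h (a + n.+1%:Z)) -> injective h.
Proof.
move=> hneq; suff lt_neq a b : a < b -> h a <> h b.
  by move=> a b e; case: (ltgtP a b) => // [/lt_neq|/lt_neq/nesym].
move=> ab; have [n ->] : exists n : nat, b = a + n.+1%:Z.
  by exists (absz (b - a - 1)%R); lia.
exact: hneq.
Qed.

Section Darts.
Variable d : nat.
Variables M M' : set (Sigma d).
Hypotheses (hM : matching M) (hM' : matching M').
Local Notation D := (symdiff M M').
Local Notation other := (other M M').

Definition dart := (vtx d * Sigma d)%type.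

(* A dart [(v, s)] is a walker standing at [v] that arrived through [s]. *)
Definition is_dart (x : dart) := D x.2 /\ touches x.1 x.2.

Definition next_dart (x : dart) : dart := let t := other x.1 x.2 in (far t x.1, t).
Definition prev_dart (x : dart) : dart := let u := far x.2 x.1 in (u, other u x.2).
Definition reverse_dart (x : dart) : dart := (far x.2 x.1, x.2).

Lemma next_dart_is_dart x : is_dart x -> is_dart (next_dart x).
Proof.
case: x => v s [Ds vs]; have [Do vo _ _] := otherP hM hM' Ds vs.
by split=> //; apply: far_touches.
Qed.

Lemma prev_dart_is_dart x : is_dart x -> is_dart (prev_dart x).
Proof.
case: x => v s [Ds vs]; have us := far_touches vs.
by have [] := otherP hM hM' Ds us.
Qed.

Lemma reverse_dart_is_dart x : is_dart x -> is_dart (reverse_dart x).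
Proof. by case: x => v s [Ds vs]; split=> //; apply: far_touches. Qed.

Lemma next_dartK x : is_dart x -> prev_dart (next_dart x) = x.
Proof.
case: x => v s [Ds vs]; have [_ vo _ _] := otherP hM hM' Ds vs.
by rewrite /prev_dart /next_dart /= farK // otherK.
Qed.

Lemma prev_dartK x : is_dart x -> next_dart (prev_dart x) = x.
Proof.
case: x => v s [Ds vs]; have us := far_touches vs.
by rewrite /prev_dart /next_dart /= otherK // farK.
Qed.

Lemma next_reverse_dart x : next_dart (reverse_dart x) = reverse_dart (prev_dart x).
Proof. by []. Qed.

Lemma next_dart_edge_between x : is_dart x -> is_edge (next_dart x).2 ->
  edge_between x.1 (next_dart x).1 (next_dart x).2.
Proof.
case: x => v s [Ds vs] e; have [_ vo _ _] := otherP hM hM' Ds vs.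
exact: edge_between_far.
Qed.

Local Notation walk x k := (iterz next_dart prev_dart k x).

Lemma walk_is_dart x k : is_dart x -> is_dart (walk x k).
Proof. exact: (iterz_stable next_dart_is_dart prev_dart_is_dart). Qed.

Lemma walkS x k : is_dart x -> walk x (k + 1) = next_dart (walk x k).
Proof. exact: (iterzS prev_dart_is_dart prev_dartK). Qed.

Lemma walkD x k l : is_dart x -> walk x (k + l) = walk (walk x k) l.
Proof. exact: (iterzD next_dart_is_dart prev_dart_is_dart next_dartK prev_dartK). Qed.

Lemma walk_reverse x k : is_dart x ->
  walk (reverse_dart x) k = reverse_dart (walk x (- k)).
Proof.
exact: (iterz_conj next_dart_is_dart prev_dart_is_dart next_dartK prev_dartK
  reverse_dart_is_dart (fun x _ => next_reverse_dart x)).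
Qed.

Definition trail (x : dart) := [set t | exists k, (walk x k).2 = t].

Lemma trail_walk x k : is_dart x -> trail (walk x k) = trail x.
Proof.
move=> xD; apply/predeqP => t; split=> -[l <-].
  by exists (k + l); rewrite walkD.
by exists (l - k); rewrite -walkD // addrC subrK.
Qed.

Lemma trail_reverse x : is_dart x -> trail (reverse_dart x) = trail x.
Proof.
move=> xD; apply/predeqP => t; split=> -[l <-]; exists (- l).
  by rewrite walk_reverse.
by rewrite walk_reverse // opprK.
Qed.

Lemma trail_sub x : is_dart x -> trail x `<=` D.
Proof. by move=> xD t [k <-]; case: (walk_is_dart k xD). Qed.

Lemma trail_eq x y t : is_dart x -> is_dart y -> trail x t -> trail y t ->
  trail x = trail y.
Proof.
move=> xD yD [k <-] [l e]; rewrite -(trail_walk k xD) -(trail_walk l yD).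
move: (walk_is_dart k xD) (walk_is_dart l yD) e.
case: (walk x k) => v s; case: (walk y l) => w s' [/= Ds vs] [_ /= wt] /= s's; subst s'.
have [<-|->] := touches_far vs wt; first by [].
by rewrite -[(far s v, s)]/(reverse_dart (v, s)) (@trail_reverse (v, s) (conj Ds vs)).
Qed.

Hypothesis finite_closed_eq0 :
  forall C, C `<=` D -> finite_set C -> other_closed M M' C -> C = set0.

Section Ray.
Variable x0 : dart.
Hypothesis x0D : is_dart x0.
Local Notation vv m := (iter m next_dart x0).1.
Local Notation ss m := (iter m next_dart x0).2.

Lemma ray_is_dart m : is_dart (iter m next_dart x0).
Proof. exact: iter_stable next_dart_is_dart x0D. Qed.

Lemma ray_touches_prev m : touches (vv m) (ss m.+1).
Proof. by have [Ds vs] := ray_is_dart m; have [] := otherP hM hM' Ds vs. Qed.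

Lemma ray_other_prev m : other (vv m) (ss m.+1) = ss m.
Proof. by have [Ds vs] := ray_is_dart m; apply: otherK. Qed.

Lemma ray_elem_neq m : ss m.+1 <> ss m.
Proof. by have [Ds vs] := ray_is_dart m; have [] := otherP hM hM' Ds vs. Qed.

Lemma ray_touches w m : touches w (ss m.+1) -> w = vv m \/ w = vv m.+1.
Proof. exact: touches_far (ray_touches_prev m). Qed.

Definition ray_segment lo hi := [set t | exists2 m, (lo <= m <= hi)%N & ss m = t].

Lemma ray_segment_not_closed lo hi : (lo <= hi)%N ->
  ray_segment lo hi (other (vv hi) (ss hi)) ->
  (forall w, touches w (ss lo) -> w <> vv lo -> ray_segment lo hi (other w (ss lo))) ->
  False.
Proof.
move=> lohi Shi Slo.
have : ray_segment lo hi (ss lo) by exists lo; rewrite ?leqnn ?lohi.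
rewrite (finite_closed_eq0 (C := ray_segment lo hi)) //.
- by move=> t [m _ <-]; case: (ray_is_dart m).
- apply: (sub_finite_set (B := (fun m => ss m) @` `I_hi.+1)).
    by move=> t [m /andP[_ mh] <-]; exists m.
  exact/finite_image/finite_II.
move=> w t [m /andP[lm mh] <-] tw.
have [->|w_neq] := eqVneq w (vv m).
  have [m_lt|m_eq] : (m < hi)%N \/ m = hi by lia.
    by exists m.+1; rewrite ?m_lt ?(leq_trans lm).
  by rewrite m_eq.
have [lo_lt|lo_eq] : (lo < m)%N \/ lo = m by lia.
  case: m lo_lt lm mh tw w_neq => // m lo_lt _ mh tw w_neq.
  have [->|/eqP] := ray_touches tw; last by rewrite (negbTE w_neq).
  by rewrite ray_other_prev; exists m; rewrite // -ltnS lo_lt ltnW.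
by rewrite -lo_eq in tw w_neq *; apply: Slo => // /eqP; rewrite (negbTE w_neq).
Qed.

Lemma ray_edges : ~~ is_edge (ss 0) -> forall n, is_edge (ss n.+1).
Proof.
move=> s0 n; apply/negPn/negP => sn.
apply: (@ray_segment_not_closed 0 n.+1) => // [|w tw].
  by rewrite /= far_vertex // ray_other_prev; exists n => //; rewrite leqW.
have [_ v0] := x0D; have [->|->] := touches_far v0 tw; first by [].
by rewrite far_vertex.
Qed.

Hypothesis edges : forall m, is_edge (ss m.+1).

Lemma ray_edge_between m : edge_between (vv m) (vv m.+1) (ss m.+1).
Proof. exact: next_dart_edge_between (ray_is_dart m) (edges m). Qed.

Lemma ray_vertex_neq i n : vv i <> vv (i + n.+1).
Proof.
elim/ltn_ind: n i => n IH i E.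
have [Dhi vhi] := ray_is_dart (i + n.+1); have [D1 _] := ray_is_dart i.+1.
have [n0|n_gt0] := posnP n.
  by move: E; rewrite n0 addn1 => /esym; apply: far_neq (edges i) (ray_touches_prev i).
have [s_eq|s_neq] := pselect (ss i.+1 = ss (i + n.+1)).
  (* the ray came back to [vv i] through the edge it left by, so it already was
     at [vv i.+1] one step earlier *)
  have [n1|n_gt1] : n = 1%N \/ (1 < n)%N by lia.
    by case: (ray_elem_neq (m := i.+1)); rewrite s_eq n1 addn2.
  apply: (IH n.-2 _ i.+1); first by lia.
  have -> : (i.+1 + n.-2.+1 = (i + n.-1).+1)%N by lia.
  have e : (i + n.+1 = (i + n.-1).+1.+1)%N by lia.
  transitivity (far (ss (i + n.+1)) (vv (i + n.+1))); first by rewrite -s_eq -E.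
  by rewrite e; apply: farK (ray_touches_prev _).
(* otherwise the elements used between the two visits of [vv i] are closed
   under [other] *)
apply: (@ray_segment_not_closed i.+1 (i + n.+1)); first by lia.
  rewrite (other_eq hM hM' Dhi vhi D1) //; first by exists i.+1; rewrite ?leqnn //; lia.
  by rewrite -E; apply: ray_touches_prev.
move=> w tw w_neq; have [->|//] := ray_touches tw.
rewrite (other_eq hM hM' D1 (ray_touches_prev i) Dhi).
  by exists (i + n.+1) => //; lia.
  by rewrite E.
by apply: nesym.
Qed.

Lemma ray_injective : injective (fun m => vv m).
Proof.
move=> a b /= E; have [lt|gt|//] := ltngtP a b.
  by move: E; rewrite -(subnKC lt) addSnnS => /ray_vertex_neq.
by move: E => /esym; rewrite -(subnKC gt) addSnnS => /ray_vertex_neq.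
Qed.

End Ray.

Lemma trail_from_vertex x : is_dart x -> ~~ is_edge x.2 ->
  simple_infinite_path (trail x).
Proof.
move=> xD x2; have edges := ray_edges xD x2.
have [u xE] : exists u, x = (u, SV u).
  by case: x xD x2 {edges} => v [w|//] [_ /= ->]; exists w.
have rx : reverse_dart x = x by rewrite xE.
have trailE : trail x = [set t | exists n, (iter n next_dart x).2 = t].
  apply/predeqP => t; split=> -[k <-]; last by exists k.
  case: k => n; first by exists n.
  by exists n.+1; rewrite -[in RHS]rx walk_reverse.
exists (fun n => (iter n next_dart x).1); split; first exact: ray_injective.
split; first by move=> n; apply/edge_between_adj/ray_edge_between.
rewrite trailE; apply/predeqP => t; split.
  case=> -[|n] <-; last by right; exists n; apply: ray_edge_between.
  by left; rewrite xE.
case=> [->|[n /edge_between_uniq e]].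
  by exists 0%N; rewrite xE.
by exists n.+1; apply/esym/e/ray_edge_between.
Qed.

Lemma trail_of_edges x : is_dart x -> (forall k, is_edge (walk x k).2) ->
  biinfinite_path (trail x).
Proof.
move=> xD edges; pose v k := (walk x k).1.
have stepE k : edge_between (v k) (v (k + 1)) (walk x (k + 1)).2.
  rewrite /v walkS //; apply: next_dart_edge_between; first exact: walk_is_dart.
  by rewrite -walkS.
exists v; split.
  apply: int_injective => a n; rewrite /v walkD //.
  have ray_edges_at m : is_edge (iter m.+1 next_dart (walk x a)).2.
    by have := edges (a + m.+1%:Z); rewrite walkD.
  exact: (ray_vertex_neq (walk_is_dart a xD) ray_edges_at (i := 0%N)).
split; first by move=> k; apply: edge_between_adj (stepE k).
apply/predeqP => t; split=> [[k <-]|[k /edge_between_uniq e]].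
  by exists (k - 1); have := stepE (k - 1); rewrite subrK.
by exists (k + 1); apply/esym/e.
Qed.

Lemma trail_path x : is_dart x ->
  simple_infinite_path (trail x) \/ biinfinite_path (trail x).
Proof.
move=> xD; have [[k vertex]|no_vertex] := pselect (exists k, ~~ is_edge (walk x k).2).
  left; rewrite -(trail_walk k xD).
  by apply: trail_from_vertex => //; apply: walk_is_dart.
right; apply: trail_of_edges => // k.
by apply/negPn/negP => vertex; apply: no_vertex; exists k.
Qed.

Lemma symdiff_paths : disjoint_union_of_paths D.
Proof.
exists [set P | exists2 x, is_dart x & P = trail x]; split.
  by move=> P [x xD ->]; apply: trail_path.
split.
  move=> P Q [x xD ->] [y yD ->] PQ; apply/predeqP => t; split=> // -[Pt Qt].
  exact/PQ/(trail_eq xD yD Pt Qt).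
apply/predeqP => t; split=> [Dt|[P [x xD ->] /(trail_sub xD)] //].
have [v vt] : exists v, touches v t by case: t Dt => [w|[w i]] _; exists w; [|left].
by exists (trail (v, t)); [exists (v, t) | exists 0].
Qed.

End Darts.

Unset Implicit Arguments.
Set Strict Implicit.

Theorem lemma4p1 (R : realType) (d : nat) (J : Sigma d -> R)
    (M M' : set (Sigma d)) :
  generic J -> matching M -> matching M' ->
  ground_state J M -> ground_state J M' ->
  disjoint_union_of_paths (symdiff M M').
Proof.
move=> hJ hM hM' gM gM'; apply: (symdiff_paths hM hM') => C.
exact: (ground_states_finite_closed_eq0 hM hM' (C := C) hJ gM gM').
Qed.
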